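(* Let $(G,M,\Delta)$ be a Garside structure, $(H,N,\delta)$ a parabolic substructure, and $T$ the set of $(H,N)$-reduced elements of $G$. Let $\theta\in T\setminus M$ with right $\Delta$-form $\theta=c\Delta^{-p}$, $p\ge1$, and let $b\in N$. Then $bc$ is unmovable and $bc\Delta^{-p}$ is the right $\Delta$-form of $b\theta$.
   Context: Let $G$ be a group and $M$ a submonoid with $M\cap M^{-1}=\{1\}$. Define $\alpha\le_L\beta$ iff $\alpha^{-1}\beta\in M$, and $\alpha\le_R\beta$ iff $\beta\alpha^{-1}\in M$. For $a\in M$ let $\mathrm{Div}_L(a)=\{b\in M: b\le_L a\}$, $\mathrm{Div}_R(a)=\{b\in M: b\le_R a\}$; $a$ is balanced if these coincide, and then $\mathrm{Div}(a)$ denotes this set. $M$ is Noetherian if each $a\in M$ admits an $n$ such that $a$ is not a product of more than $n$ non-trivial factors. A Garside structure $(G,M,\Delta)$: $\Delta\in M$ balanced, $M$ Noetherian, $\mathrm{Div}(\Delta)$ finite and generating $M$ as a monoid and $G$ as a group, $(G,\le_L)$ a lattice with meet $\wedge_L$. A parabolic substructure $(H,N,\delta)$: $\delta\in M$ balanced, $H$ (resp. $N$) the subgroup (resp. submonoid) generated by $\mathrm{Div}(\delta)$, and $\mathrm{Div}(\delta)=\mathrm{Div}(\Delta)\cap N$; it is assumed $H\ne\{1\}$. Put $\omega=\delta^{-1}\Delta$. $a\in M$ is unmovable if $\Delta\not\le_L a$; every $\alpha\in G$ has a unique right $\Delta$-form $\alpha=a\Delta^p$ ($a\in M$ unmovable,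 $p\in\mathbb Z$). $a\in M$ is $N$-reduced if $a\wedge_L\delta=1$. $\alpha$ with right $\Delta$-form $a\Delta^p$ is $(H,N)$-reduced if $a$ is $N$-reduced and either $p=0$, or $p<0$ and $\omega\not\le_L a$. *)

From Stdlib Require Import ZArith List.
Import ListNotations.
Set Implicit Arguments.

Record group := Group {
  gcar :> Type;
  gmul : gcar -> gcar -> gcar;
  gone : gcar;
  ginv : gcar -> gcar;
  gmulA : forall x y z, gmul x (gmul y z) = gmul (gmul x y) z;
  gmul1l : forall x, gmul gone x = x;
  gmul1r : forall x, gmul x gone = x;
  gmulVl : forall x, gmul (ginv x) x = gone;
  gmulVr : forall x, gmul x (ginv x) = gone
}.

Section Garside.
Variable G : group.
Local Notation "x * y" := (gmul G x y).
Local Notation "1" := (gone G).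
Local Notation "x ^-1" := (ginv G x) (at level 2).

Definition gprod (l : list G) : G := fold_right (fun x y => x * y) 1 l.

Fixpoint npow (x : G) (n : nat) : G :=
  match n with O => 1 | S n => x * npow x n end.
Definition zpow (x : G) (p : Z) : G :=
  match p with
  | Z0 => 1
  | Zpos n => npow x (Pos.to_nat n)
  | Zneg n => (npow x (Pos.to_nat n))^-1
  end.

Definition submonoid (M : G -> Prop) : Prop :=
  M 1 /\ (forall x y, M x -> M y -> M (x * y)).
Definition pointed (M : G -> Prop) : Prop :=
  forall x, M x -> M (x^-1) -> x = 1.

Variable M : G -> Prop.

Definition leL (x y : G) : Prop := M (x^-1 * y).
Definition leR (x y : G) : Prop := M (y * x^-1).

Definition DivL (a : G) (b : G) : Prop := M b /\ leL b a.
Definition DivR (a : G) (b : G) : Prop := M b /\ leR b a.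
Definition balanced (a : G) : Prop := M a /\ forall b, DivL a b <-> DivR a b.
(** Div(a), used only for balanced a *)
Definition Div (a : G) : G -> Prop := DivL a.

Definition noetherian : Prop :=
  forall a, M a -> exists n : nat, forall l : list G,
    Forall (fun x => M x /\ x <> 1) l -> gprod l = a -> length l <= n.

Definition gen_monoid (S : G -> Prop) (x : G) : Prop :=
  exists l : list G, Forall S l /\ x = gprod l.
Definition gen_group (S : G -> Prop) (x : G) : Prop :=
  exists l : list G, Forall (fun y => S y \/ S (y^-1)) l /\ x = gprod l.

Definition finite_set (S : G -> Prop) : Prop :=
  exists l : list G, forall x, S x -> In x l.

Definition is_meetL (x y m : G) : Prop :=
  leL m x /\ leL m y /\ forall z, leL z x -> leL z y -> leL z m.
Definition is_joinL (x y j : G) : Prop :=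
  leL x j /\ leL y j /\ forall z, leL x z -> leL y z -> leL j z.
Definition latticeL : Prop :=
  forall x y, (exists m, is_meetL x y m) /\ (exists j, is_joinL x y j).

Definition garside (Delta : G) : Prop :=
  submonoid M /\ pointed M /\
  balanced Delta /\ noetherian /\
  finite_set (Div Delta) /\
  (forall x, M x <-> gen_monoid (Div Delta) x) /\
  (forall x, gen_group (Div Delta) x) /\
  latticeL.

(** parabolic substructure (H, N, δ), with H = gen_group (Div δ), N = gen_monoid (Div δ) *)
Definition parabolic (Delta delta : G) : Prop :=
  balanced delta /\
  (forall x, Div delta x <-> (Div Delta x /\ gen_monoid (Div delta) x)) /\
  (exists h, gen_group (Div delta) h /\ h <> 1).

Definition unmovable (Delta a : G) : Prop := M a /\ ~ leL Delta a.

Definition right_form (Delta alpha a : G) (p : Z) : Prop :=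
  unmovable Delta a /\ alpha = a * zpow Delta p.

Definition N_reduced (delta a : G) : Prop := M a /\ is_meetL a delta 1.

Definition HN_reduced (Delta delta alpha : G) : Prop :=
  exists a p, right_form Delta alpha a p /\ N_reduced delta a /\
    (p = 0%Z \/ ((p < 0)%Z /\ ~ leL (delta^-1 * Delta) a)).

End Garside.

(** The element [omega = delta^-1 Delta] cannot be pushed to the right past a
    divisor [s] of [delta]: if [omega <=L s y] with [y] in [M], then the meet
    [z] of [omega] and [y] satisfies [s^-1 omega <=L z <=L omega], and writing
    [Delta = u delta z] one finds that [u delta] is a divisor of [Delta] lying in
    [N], hence a divisor of [delta], which forces [u = 1] and [z = omega].
    Consequently [omega <=L b y] implies [omega <=L y] for every [b] in [N].
    Since [theta] is (H,N)-reduced and not in [M], uniqueness of right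
    [Delta]-forms gives [~ omega <=L c]; as [omega <=L Delta], the element
    [b c] cannot be a left multiple of [Delta]. *)

From Stdlib Require Import ZArith Lia.

Declare Scope group_scope.
Local Notation "x * y" := (gmul _ x y) : group_scope.
Local Notation "x ^-1" := (ginv _ x) (at level 2, left associativity) : group_scope.
Local Notation "1" := (gone _) : group_scope.

Section GroupFacts.
Local Open Scope group_scope.
Variable G : group.
Implicit Types x y : G.

Lemma mulKg x y : x^-1 * (x * y) = y.
Proof. now rewrite gmulA, gmulVl, gmul1l. Qed.

Lemma mulKVg x y : x * (x^-1 * y) = y.
Proof. now rewrite gmulA, gmulVr, gmul1l. Qed.

Lemma invg_uniq x y : x * y = 1 -> x^-1 = y.
Proof. intros Hxy. now rewrite <- (gmul1r G x^-1), <- Hxy, mulKg. Qed.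

Lemma invMg x y : (x * y)^-1 = y^-1 * x^-1.
Proof. apply invg_uniq. now rewrite <- gmulA, mulKVg, gmulVr. Qed.

Lemma invgK x : x^-1^-1 = x.
Proof. apply invg_uniq, gmulVl. Qed.

Lemma invg1 : (gone G)^-1 = 1.
Proof. apply invg_uniq, gmul1l. Qed.

End GroupFacts.

#[global] Hint Rewrite invMg invgK invg1 gmul1l gmul1r gmulVl gmulVr mulKg mulKVg : gsimpl.
#[global] Hint Rewrite <- gmulA : gsimpl.
Tactic Notation "gsimpl" := autorewrite with gsimpl.
Tactic Notation "gsimpl" "in" hyp(H) := autorewrite with gsimpl in H.

Section Powers.
Local Open Scope group_scope.
Variables (G : group) (x : G).

Lemma npow_comm n : x * npow G x n = npow G x n * x.
Proof.
  induction n as [|n IH]; simpl.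
  - now rewrite gmul1l, gmul1r.
  - now rewrite <- gmulA, <- IH.
Qed.

Lemma zpow0 : zpow G x 0 = gone G.
Proof. reflexivity. Qed.

Lemma zpow_succ p : zpow G x (Z.succ p) = x * zpow G x p.
Proof.
  destruct p as [|n|n].
  - reflexivity.
  - rewrite <- Pos2Z.inj_succ; simpl. now rewrite Pos2Nat.inj_succ.
  - destruct (Pos.succ_pred_or n) as [-> | <-].
    + simpl. now gsimpl.
    + replace (Z.succ (Z.neg (Pos.succ (Pos.pred n)))) with (Z.neg (Pos.pred n)) by lia.
      simpl; rewrite Pos2Nat.inj_succ; simpl.
      rewrite npow_comm. now gsimpl.
Qed.

Lemma zpow_pred p : zpow G x (Z.pred p) = x^-1 * zpow G x p.
Proof. rewrite <- (Z.succ_pred p) at 2. now rewrite zpow_succ, mulKg. Qed.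

Lemma zpow_add p q : zpow G x (p + q) = zpow G x p * zpow G x q.
Proof.
  induction p as [|p IH|p IH] using Z.peano_ind.
  - now rewrite Z.add_0_l, zpow0, gmul1l.
  - now rewrite Z.add_succ_l, !zpow_succ, IH, gmulA.
  - now rewrite Z.add_pred_l, !zpow_pred, IH, gmulA.
Qed.

Lemma zpow_opp p : zpow G x (- p) = (zpow G x p)^-1.
Proof. destruct p; simpl; now gsimpl. Qed.

Lemma zpow_sub p q : zpow G x (p - q) = zpow G x p * (zpow G x q)^-1.
Proof. now rewrite <- Z.add_opp_r, zpow_add, zpow_opp. Qed.

Lemma zpow_mul_eq a c p q : a * zpow G x p = c * zpow G x q -> c = a * zpow G x (p - q).
Proof. intros E. rewrite zpow_sub, gmulA, E. now gsimpl. Qed.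

End Powers.

Arguments zpow_mul_eq {G x a c p q}.

Section Submonoid.
Local Open Scope group_scope.
Variables (G : group) (M : G -> Prop).
Hypothesis sm : submonoid G M.
Local Notation "x <=L y" := (leL G M x y) (at level 70).

Lemma leL_trans x y z : x <=L y -> y <=L z -> x <=L z.
Proof.
  unfold leL; intros Hxy Hyz.
  replace (x^-1 * z) with ((x^-1 * y) * (y^-1 * z)) by now gsimpl.
  now apply sm.
Qed.

Lemma npow_M x n : M x -> M (npow G x n).
Proof. intros Mx; induction n; simpl; now apply sm. Qed.

Lemma gen_monoid_sub (S P : G -> Prop) x :
  submonoid G P -> (forall s, S s -> P s) -> gen_monoid G S x -> P x.
Proof.
  intros [P1 Pmul] SP [l [Hl ->]].
  induction Hl as [|s l Ss _ IH]; simpl; auto.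
Qed.

Lemma gen_monoid_M (S : G -> Prop) x :
  (forall s, S s -> M s) -> gen_monoid G S x -> M x.
Proof. now apply gen_monoid_sub. Qed.

Lemma gen_monoid_conj (S : G -> Prop) g x :
  (forall s, S s -> M (g * s * g^-1)) -> gen_monoid G S x -> M (g * x * g^-1).
Proof.
  apply (gen_monoid_sub _ (fun x => M (g * x * g^-1))).
  split.
  - gsimpl. apply sm.
  - intros y z My Mz.
    replace (g * (y * z) * g^-1) with ((g * y * g^-1) * (g * z * g^-1)) by now gsimpl.
    now apply sm.
Qed.

End Submonoid.

Section Balanced.
Local Open Scope group_scope.
Variables (G : group) (M : G -> Prop) (d : G).
Hypotheses (sm : submonoid G M) (hd : balanced G M d).

Lemma div_refl : Div G M d d.
Proof. split; [exact (proj1 hd)|]. unfold leL; gsimpl; apply sm. Qed.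

Lemma div_complement s : Div G M d s -> Div G M d (d * s^-1).
Proof.
  intros Hs; apply hd in Hs as [Ms Hs].
  split; [exact Hs|]. unfold leL; now gsimpl.
Qed.

Lemma balanced_conj s : Div G M d s -> M (d * s * d^-1).
Proof.
  intros Hs; apply div_complement, hd in Hs as [_ Hs].
  unfold leR in Hs; gsimpl; now gsimpl in Hs.
Qed.

Lemma balanced_conjV s : Div G M d s -> M (d^-1 * s * d).
Proof.
  intros [Ms Hs].
  assert (Hc : DivR G M d (s^-1 * d)) by (split; [exact Hs | unfold leR; now gsimpl]).
  apply hd in Hc as [_ Hc].
  unfold leL in Hc; gsimpl; now gsimpl in Hc.
Qed.

End Balanced.

Section GarsideConjugation.
Local Open Scope group_scope.
Variables (G : group) (M : G -> Prop) (Delta : G).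
Hypotheses (sm : submonoid G M) (hD : balanced G M Delta)
  (hgen : forall x, M x <-> gen_monoid G (Div G M Delta) x).

Lemma M_conj x : M x -> M (Delta * x * Delta^-1).
Proof.
  intros Mx; apply hgen in Mx.
  apply (gen_monoid_conj _ _ sm _ _ _ (balanced_conj _ _ _ hD) Mx).
Qed.

Lemma M_conjV x : M x -> M (Delta^-1 * x * Delta).
Proof.
  intros Mx; apply hgen in Mx.
  pose proof (gen_monoid_conj _ _ sm (Div G M Delta) Delta^-1 x) as Hconj.
  rewrite invgK in Hconj.
  exact (Hconj (balanced_conjV _ _ _ hD) Mx).
Qed.

End GarsideConjugation.

Section RightForms.
Local Open Scope group_scope.
Variables (G : group) (M : G -> Prop) (Delta : G).
Hypotheses (sm : submonoid G M) (MD : M Delta)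
  (hconjV : forall x, M x -> M (Delta^-1 * x * Delta)).
Local Notation "x <=L y" := (leL G M x y) (at level 70).

Lemma leL_mul_zpow_pos a k : M a -> (0 < k)%Z -> Delta <=L a * zpow G Delta k.
Proof.
  intros Ma Hk; destruct k as [|n|n]; try lia; simpl.
  destruct (Pos2Nat.is_succ n) as [m ->]; simpl; unfold leL.
  replace (Delta^-1 * (a * (Delta * npow G Delta m)))
    with ((Delta^-1 * a * Delta) * npow G Delta m) by now gsimpl.
  apply sm; [now apply hconjV | now apply npow_M].
Qed.

Lemma right_form_uniq alpha a c p q :
  right_form G M Delta alpha a p -> right_form G M Delta alpha c q -> a = c.
Proof.
  intros [[Ma Ua] Ea] [[Mc Uc] Ec].
  assert (E : a * zpow G Delta p = c * zpow G Delta q) by congruence.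
  destruct (Z.lt_trichotomy q p) as [Hlt | [-> | Hgt]].
  - exfalso; apply Uc. rewrite (zpow_mul_eq E). apply leL_mul_zpow_pos; [exact Ma | lia].
  - apply zpow_mul_eq in E. now rewrite Z.sub_diag, zpow0, gmul1r in E.
  - exfalso; apply Ua. symmetry in E. rewrite (zpow_mul_eq E).
    apply leL_mul_zpow_pos; [exact Mc | lia].
Qed.

Variable delta : G.
Local Notation omega := (delta^-1 * Delta).

Lemma HN_reduced_omega_nleL theta c p :
  HN_reduced G M Delta delta theta -> ~ M theta ->
  right_form G M Delta theta c p -> ~ omega <=L c.
Proof.
  intros [a [q [Ha [_ Hq]]]] HnM Hc.
  destruct Hq as [-> | [_ Hwa]].
  - exfalso; apply HnM. destruct Ha as [[Ma _] ->]. now rewrite zpow0, gmul1r.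
  - now rewrite <- (right_form_uniq _ _ _ _ _ Ha Hc).
Qed.

End RightForms.

Section Parabolic.
Local Open Scope group_scope.
Variables (G : group) (M : G -> Prop) (Delta delta : G).
Hypotheses (sm : submonoid G M) (pt : pointed G M) (hd : balanced G M delta)
  (hconj : forall x, M x -> M (Delta * x * Delta^-1))
  (hconjV : forall x, M x -> M (Delta^-1 * x * Delta))
  (hpar : forall x, Div G M delta x <-> Div G M Delta x /\ gen_monoid G (Div G M delta) x)
  (hlat : latticeL G M).
Local Notation "x <=L y" := (leL G M x y) (at level 70).
Local Notation omega := (delta^-1 * Delta).

Lemma M_omega : M omega.
Proof. now destruct (proj1 (hpar delta) (div_refl _ _ _ sm hd)) as [[_ Hw] _]. Qed.

Lemma leL_omega_Delta : omega <=L Delta.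
Proof.
  unfold leL. replace (omega^-1 * Delta) with (Delta^-1 * delta * Delta) by now gsimpl.
  exact (hconjV _ (proj1 hd)).
Qed.

Lemma omega_interval_trivial s z :
  Div G M delta s -> M z -> s^-1 * omega <=L z -> z <=L omega -> z = omega.
Proof.
  intros Hs Mz Hlo Hhi; unfold leL in Hlo, Hhi.
  set (u := Delta * z^-1 * delta^-1).
  assert (Mu : M u).
  { replace u with (Delta * (z^-1 * omega) * Delta^-1) by (unfold u; now gsimpl).
    now apply hconj. }
  assert (Du : Div G M delta u).
  { apply hd; split; [exact Mu|]; unfold leR.
    replace (delta * u^-1) with ((delta * (delta * s^-1) * delta^-1)
      * (Delta * ((s^-1 * omega)^-1 * z) * Delta^-1)) by (unfold u; now gsimpl).
    apply sm; [now apply balanced_conj, div_complement | now apply hconj]. }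
  assert (Dud : Div G M delta (u * delta)).
  { apply hpar; split.
    - split; [exact (proj2 sm _ _ Mu (proj1 hd))|]; unfold leL.
      replace ((u * delta)^-1 * Delta) with z by (unfold u; now gsimpl).
      exact Mz.
    - exists (u :: delta :: nil)%list; split.
      + constructor; [exact Du | constructor; [exact (div_refl _ _ _ sm hd) | constructor]].
      + simpl; now gsimpl. }
  apply hd in Dud as [_ Hud]; unfold leR in Hud; gsimpl in Hud.
  assert (Hz : z = delta^-1 * u^-1 * Delta) by (unfold u; now gsimpl).
  rewrite Hz, (pt _ Mu Hud), invg1. now gsimpl.
Qed.

Lemma leL_omega_cancel_div s y :
  Div G M delta s -> M y -> omega <=L s * y -> omega <=L y.
Proof.
  intros Hs My Hsy.
  destruct (hlat omega y) as [[z [Hzo [Hzy Hglb]]] _].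
  assert (Mz : M z).
  { assert (H1 : gone G <=L z) by (apply Hglb; unfold leL; gsimpl; [exact M_omega | exact My]).
    unfold leL in H1; now gsimpl in H1. }
  assert (Hlo : s^-1 * omega <=L z).
  { apply Hglb; unfold leL.
    - replace ((s^-1 * omega)^-1 * omega) with (Delta^-1 * (delta * s * delta^-1) * Delta)
        by now gsimpl.
      now apply hconjV, balanced_conj.
    - replace ((s^-1 * omega)^-1 * y) with (omega^-1 * (s * y)) by now gsimpl.
      exact Hsy. }
  now rewrite <- (omega_interval_trivial _ _ Hs Mz Hlo Hzo).
Qed.

Lemma leL_omega_cancel b y :
  gen_monoid G (Div G M delta) b -> M y -> omega <=L b * y -> omega <=L y.
Proof.
  intros Hb.
  enough (H : M b /\ forall y, M y -> omega <=L b * y -> omega <=L y) by apply H.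
  apply (gen_monoid_sub _ (Div G M delta)
           (fun b => M b /\ forall y, M y -> omega <=L b * y -> omega <=L y)); [| | exact Hb].
  - split.
    + split; [apply sm|]. intros y' _ H; now gsimpl in H.
    + intros x x' [Mx Hx] [Mx' Hx']; split; [now apply sm|].
      intros y' My' H. apply Hx'; [exact My'|]. apply Hx; [now apply sm|].
      now rewrite gmulA.
  - intros s Hs; split; [exact (proj1 Hs)|].
    intros y' My'; now apply leL_omega_cancel_div.
Qed.

End Parabolic.

Theorem lemma3p9 (G : group) (M : G -> Prop) (Delta delta : G)
  (hG : garside G M Delta) (hP : parabolic G M Delta delta)
  (theta c b : G) (p : nat) (hp : 1 <= p)
  (hT : HN_reduced G M Delta delta theta) (hnM : ~ M theta)
  (hform : right_form G M Delta theta c (- Z.of_nat p))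
  (hb : gen_monoid G (Div G M delta) b) :
  unmovable G M Delta (gmul G b c) /\
  right_form G M Delta (gmul G b theta) (gmul G b c) (- Z.of_nat p).
Proof.
  destruct hG as [sm [pt [hD [_ [_ [hgen [_ hlat]]]]]]].
  destruct hP as [hd [hpar _]].
  pose proof (M_conj _ _ _ sm hD hgen) as hconj.
  pose proof (M_conjV _ _ _ sm hD hgen) as hconjV.
  pose proof (HN_reduced_omega_nleL _ _ _ sm (proj1 hD) hconjV _ _ _ _ hT hnM hform) as Hc.
  destruct hform as [[Mc _] ->].
  assert (Ubc : unmovable G M Delta (gmul G b c)).
  { split.
    - apply sm; [exact (gen_monoid_M _ _ sm _ _ (fun s Hs => proj1 Hs) hb) | exact Mc].
    - intros HDbc; apply Hc.
      apply (leL_omega_cancel _ _ _ _ sm pt hd hconj hconjV hpar hlat _ _ hb Mc).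
      exact (leL_trans _ _ sm _ _ _ (leL_omega_Delta _ _ _ _ hd hconjV) HDbc). }
  split; [exact Ubc|]. split; [exact Ubc|]. now rewrite gmulA.
Qed.
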